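(* Let $k_{11}>0$, $k_{22}>0$, $\nu\in\mathbb{R}$, and let $\mathbf{D}=\begin{pmatrix} d_{11}&d_{12}\\ d_{12}&d_{22}\end{pmatrix}$ be a real symmetric positive definite matrix. Consider the system $\ddot{\mathbf{q}}+\mathbf{D}\dot{\mathbf{q}}+(\mathbf{K}+\mathbf{N})\mathbf{q}=0$, $\mathbf{q}\in\mathbb{R}^2$, with $\mathbf{K}=\mathrm{diag}(k_{11},k_{22})$ and $\mathbf{N}=\begin{pmatrix}0&\nu\\-\nu&0\end{pmatrix}$. Then all roots $\lambda$ of $\det(\lambda^2\mathbf{I}+\lambda\mathbf{D}+\mathbf{K}+\mathbf{N})=0$ have negative real parts if and only if $$\nu^2<\frac{(k_{11}-k_{22})^2}{4}-\frac{(d_{11}-d_{22})^2(k_{11}-k_{22})^2-4(k_{11}d_{22}+k_{22}d_{11})(d_{11}d_{22}-d_{12}^2)(d_{11}+d_{22})}{4(d_{11}+d_{22})^2}.$$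
   Context: $\mathbf{I}$ denotes the $2\times2$ identity matrix. *)

(* Complex numbers = an arbitrary numClosedFieldType C
   (e.g. algC; any model of C = R[i] with R real closed); real parameters are
   elements of C that are \is Num.real. *)
From HB Require Import structures.
From mathcomp Require Import all_boot all_order all_algebra.
Set Implicit Arguments. Unset Strict Implicit. Unset Printing Implicit Defensive.
Import Order.TTheory GRing.Theory Num.Theory.
Local Open Scope ring_scope.

Definition mx2 (C : nzRingType) (a b c d : C) : 'M[C]_2 :=
  \matrix_(i < 2, j < 2)
    if i == 0 :> nat then (if j == 0 :> nat then a else b)
    else (if j == 0 :> nat then c else d).

Definition posdef (C : numFieldType) (n : nat) (A : 'M[C]_n) : Prop :=
  forall x : 'cV[C]_n, (forall i, x i 0 \is Num.real) -> x != 0 ->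
    0 < (x^T *m A *m x) 0 0.

From HB Require Import structures.
From mathcomp Require Import all_boot all_order all_algebra ring.
Set Implicit Arguments. Unset Strict Implicit.
Import Order.TTheory GRing.Theory Num.Theory.
Local Open Scope ring_scope.

(* The characteristic polynomial
   det(l^2 I + l D + K + N) is the real monic quartic
     l^4 + a1 l^3 + a2 l^2 + a3 l + a4,
   a1 = d11 + d22, a2 = k11 + k22 + det D, a3 = d11 k22 + d22 k11,
   a4 = k11 k22 + nu^2; positivity of k11, k22 and of the diagonal of the
   positive definite D gives a1, a3, a4 > 0.
   1. Every real monic quartic splits into two real monic quadratics
      (via a root in C and its conjugate, and the same for cubics).
   2. A real quadratic x^2 + p x + q with q > 0 is stable iff p > 0.
   3. Hence (Routh-Hurwitz for quartics) when a1, a3, a4 > 0 all roots are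
      stable iff a1 a2 a3 - a3^2 - a1^2 a4 > 0, since for the splitting
      (x^2 + p x + q)(x^2 + r x + w) this quantity is
      p r ((q - w)^2 + (p + r)(p w + r q)) with a positive second factor.
   4. The condition of the theorem is this Hurwitz quantity divided by a1^2. *)

Ltac real_closure :=
  rewrite ?(rpredB, rpredD, rpredM, rpredN, rpredX, rpred0, rpred1, rpred_nat) //.

Section RealPolynomials.
Variable C : numClosedFieldType.
Implicit Types a b p q r s t w x y z A B : C.

Lemma eq_by_diff x y e : x - y = e -> e = 0 -> x = y.
Proof. by move=> xy e0; apply/eqP; rewrite -subr_eq0 xy e0. Qed.

Lemma real_affine_root A B z : A \is Num.real -> B \is Num.real -> z \isn't Num.real ->
  A * z + B = 0 -> A = 0 /\ B = 0.
Proof.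
move=> AR BR zNR Az.
have Azc : A * z^* + B = 0.
  by rewrite -(conj_Creal AR) -(conj_Creal BR) -rmorphM -rmorphD Az rmorph0.
have /eqP : A * (z - z^*) = 0 by rewrite mulrBr -[A * z](addrK B) Az -[A * z^*](addrK B) Azc subrr.
rewrite mulf_eq0 subr_eq0 => /orP[/eqP A0 | zz]; last by rewrite CrealE eq_sym zz in zNR.
by split=> //; rewrite A0 mul0r add0r in Az.
Qed.

Lemma conj_quadratic z :
  exists s t, [/\ s \is Num.real, t \is Num.real & z ^+ 2 - s * z + t = 0].
Proof.
exists (z + z^*), (z * z^*); split; last by ring.
  by rewrite CrealE rmorphD /= conjCK addrC.
by rewrite CrealE rmorphM /= conjCK mulrC.
Qed.

Lemma quadratic_root p q : exists z, z ^+ 2 + p * z + q = 0.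
Proof.
have [z zE] := @solve_monicpoly C 2 (nth 0 [:: -q; -p]) isT.
by exists z; move: zE; rewrite !big_ord_recr big_ord0 /= add0r expr0 mulr1 expr1 => ->; ring.
Qed.

Lemma cubic_root a b c : exists z, z ^+ 3 + a * z ^+ 2 + b * z + c = 0.
Proof.
have [z zE] := @solve_monicpoly C 3 (nth 0 [:: -c; -b; -a]) isT.
by exists z; move: zE; rewrite !big_ord_recr big_ord0 /= add0r expr0 mulr1 expr1 => ->; ring.
Qed.

Lemma quartic_root a b c d : exists z, z ^+ 4 + a * z ^+ 3 + b * z ^+ 2 + c * z + d = 0.
Proof.
have [z zE] := @solve_monicpoly C 4 (nth 0 [:: -d; -c; -b; -a]) isT.
by exists z; move: zE; rewrite !big_ord_recr big_ord0 /= add0r expr0 mulr1 expr1 => ->; ring.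
Qed.

(* A real monic cubic factors as (x - g)(x^2 - s x + t) with g, s, t real:
   use a real root if the chosen root z is real, its conjugate pair otherwise. *)
Lemma real_cubic_factor b2 b1 b0 :
  b2 \is Num.real -> b1 \is Num.real -> b0 \is Num.real ->
  exists g s t, [/\ g \is Num.real, s \is Num.real, t \is Num.real &
     [/\ b2 = - (g + s), b1 = t + s * g & b0 = - (t * g)]].
Proof.
move=> b2R b1R b0R; have [z zroot] := cubic_root b2 b1 b0.
have [zR | zNR] := boolP (z \is Num.real).
  exists z, (- (b2 + z)), (b1 + z * (b2 + z)); split; try by real_closure.
  split; [ring | ring | apply: (eq_by_diff _ zroot); ring].
have [s [t [sR tR zquad]]] := conj_quadratic z.
set g := - b2 - s.
have rem0 : (b1 - t - s * g) * z + (b0 + t * g) = 0.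
  have -> : (b1 - t - s * g) * z + (b0 + t * g)
      = (z ^+ 3 + b2 * z ^+ 2 + b1 * z + b0) - (z ^+ 2 - s * z + t) * (z - g) by rewrite /g; ring.
  by rewrite zroot zquad mul0r subrr.
have AR : b1 - t - s * g \is Num.real by rewrite /g; real_closure.
have BR : b0 + t * g \is Num.real by rewrite /g; real_closure.
have [A0 B0] := real_affine_root AR BR zNR rem0.
exists g, s, t; split; try by rewrite /g; real_closure.
split; [rewrite /g; ring | apply: (eq_by_diff _ A0); ring | apply: (eq_by_diff _ B0); ring].
Qed.

Lemma real_quartic_factor (a1 a2 a3 a4 : C) :
  a1 \is Num.real -> a2 \is Num.real -> a3 \is Num.real -> a4 \is Num.real ->
  exists p q r w, [/\ p \is Num.real, q \is Num.real, r \is Num.real & w \is Num.real] /\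
     [/\ a1 = p + r, a2 = q + w + p * r, a3 = p * w + r * q & a4 = q * w].
Proof.
move=> a1R a2R a3R a4R; have [z zroot] := quartic_root a1 a2 a3 a4.
have [zR | zNR] := boolP (z \is Num.real).
  (* divide by the real linear factor x - z, then factor the real cubic quotient *)
  have [b2 [b1 [b0 [[b2R b1R b0R] [-> -> -> ->]]]]] : exists b2 b1 b0,
      [/\ b2 \is Num.real, b1 \is Num.real & b0 \is Num.real] /\
      [/\ a1 = b2 - z, a2 = b1 - z * b2, a3 = b0 - z * b1 & a4 = - (z * b0)].
    exists (a1 + z), (a2 + z * (a1 + z)), (a3 + z * (a2 + z * (a1 + z))).
    split; first by split; real_closure.
    by split; [ring | ring | ring | apply: (eq_by_diff _ zroot); ring].
  have [g [s [t [gR sR tR [-> -> ->]]]]] := real_cubic_factor b2R b1R b0R.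
  exists (- s), t, (- (z + g)), (z * g).
  by split; [split; real_closure | split; ring].
(* divide by the real quadratic factor vanishing at z and z^* *)
have [s [t [sR tR zquad]]] := conj_quadratic z.
set r := a1 + s; set w := a2 - t + s * r.
have rem0 : (a3 - (t * r - s * w)) * z + (a4 - t * w) = 0.
  have -> : (a3 - (t * r - s * w)) * z + (a4 - t * w) =
      (z ^+ 4 + a1 * z ^+ 3 + a2 * z ^+ 2 + a3 * z + a4)
      - (z ^+ 2 - s * z + t) * (z ^+ 2 + r * z + w) by rewrite /w /r; ring.
  by rewrite zroot zquad mul0r subrr.
have AR : a3 - (t * r - s * w) \is Num.real by rewrite /w /r; real_closure.
have BR : a4 - t * w \is Num.real by rewrite /w /r; real_closure.
have [A0 B0] := real_affine_root AR BR zNR rem0.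
exists (- s), t, r, w; split; first by split; rewrite /w /r; real_closure.
split; [rewrite /r; ring | rewrite /w; ring | apply: (eq_by_diff _ A0); ring
       | apply: (eq_by_diff _ B0); ring].
Qed.

End RealPolynomials.

Section RouthHurwitz.
Variable C : numClosedFieldType.
Implicit Types p q r w x y a b z : C.

(* A real monic quadratic with positive coefficients is stable.  Multiplying
   z^2 + p z + q = 0 by z^* and taking real parts gives
   Re z (|z|^2 + q) = - p |z|^2 < 0. *)
Lemma quadratic_stable p q z : p \is Num.real -> q \is Num.real -> 0 < p -> 0 < q ->
  z ^+ 2 + p * z + q = 0 -> 'Re z < 0.
Proof.
move=> pR qR p0 q0 zroot.
have nR : `|z| ^+ 2 \is Num.real by rewrite rpredX ?normr_real.
have z0 : z != 0 by apply: contra_eq_neq zroot => ->; rewrite expr0n mulr0 !add0r gt_eqF.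
have n0 : 0 < `|z| ^+ 2 by rewrite exprn_gt0 // normr_gt0.
have ReE : 'Re z * (`|z| ^+ 2 + q) = - (p * `|z| ^+ 2).
  have : 'Re (z^* * (z ^+ 2 + p * z + q)) = 0 by rewrite zroot mulr0 raddf0.
  have -> : z^* * (z ^+ 2 + p * z + q) = `|z| ^+ 2 * z + p * `|z| ^+ 2 + q * z^*.
    by rewrite normCK; ring.
  rewrite !raddfD /= (ReMl nR) (Creal_ReP _ (rpredM pR nR)) (ReMl qR) Re_conj /= => sum0.
  by apply: (eq_by_diff _ sum0); ring.
by rewrite -(pmulr_llt0 _ (addr_gt0 n0 q0)) ReE oppr_lt0 mulr_gt0.
Qed.

(* Conversely, if every root of x^2 + p x + q is stable then p > 0: the two roots
   z and -p - z have real parts summing to -p. *)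
Lemma quadratic_stable_coeff p q : p \is Num.real ->
  (forall z, z ^+ 2 + p * z + q = 0 -> 'Re z < 0) -> 0 < p.
Proof.
move=> pR stable; have [z zroot] := quadratic_root p q.
have zroot' : (- p - z) ^+ 2 + p * (- p - z) + q = 0 by rewrite -zroot; ring.
have ReE : 'Re (- p - z) = - p - 'Re z by rewrite raddfB raddfN /= (Creal_ReP _ pR).
rewrite -oppr_lt0 -(subrK ('Re z) (- p)) -ReE.
by apply: ltr_nDl; apply: stable.
Qed.

Lemma pos_of_prod_sum x y a b : x \is Num.real -> y \is Num.real -> 0 < a -> 0 < b ->
  0 < x * y -> 0 < a * x + b * y -> 0 < x /\ 0 < y.
Proof.
move=> xR yR a0 b0 xy0 sum0.
have [x0 | x0] := real_ltP (rpred0 _) xR; first by split=> //; rewrite -(pmulr_rgt0 _ x0).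
have y0 : y <= 0.
  rewrite real_leNgt ?rpred0 //; apply/negP => y0.
  by have := lt_le_trans xy0 (mulr_le0_ge0 x0 (ltW y0)); rewrite ltxx.
have := lt_le_trans sum0 (ler_wnDl (mulr_ge0_le0 (ltW a0) x0) (mulr_ge0_le0 (ltW b0) y0)).
by rewrite ltxx.
Qed.

(* Proof: factor the quartic as
   (x^2 + p x + q)(x^2 + r x + w); the determinant then equals
   p r ((q - w)^2 + (p + r)(p w + r q)), whose second factor is positive. *)
Lemma quartic_hurwitz (a1 a2 a3 a4 : C) :
  a1 \is Num.real -> a2 \is Num.real -> a3 \is Num.real -> a4 \is Num.real ->
  0 < a1 -> 0 < a3 -> 0 < a4 ->
  (forall z, z ^+ 4 + a1 * z ^+ 3 + a2 * z ^+ 2 + a3 * z + a4 = 0 -> 'Re z < 0) <->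
  0 < a1 * a2 * a3 - a3 ^+ 2 - a1 ^+ 2 * a4.
Proof.
move=> a1R a2R a3R a4R a1_gt0 a3_gt0 a4_gt0.
have [p [q [r [w [[pR qR rR wR] [a1E a2E a3E a4E]]]]]] := real_quartic_factor a1R a2R a3R a4R.
have factorE z : z ^+ 4 + a1 * z ^+ 3 + a2 * z ^+ 2 + a3 * z + a4
    = (z ^+ 2 + p * z + q) * (z ^+ 2 + r * z + w) by rewrite a1E a2E a3E a4E; ring.
have hurwitzE : a1 * a2 * a3 - a3 ^+ 2 - a1 ^+ 2 * a4
    = p * r * ((q - w) ^+ 2 + (p + r) * (p * w + r * q)) by rewrite a1E a2E a3E a4E; ring.
have cofactor_gt0 : 0 < (q - w) ^+ 2 + (p + r) * (p * w + r * q).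
  by rewrite -a1E -a3E ltr_wpDl ?mulr_gt0 // real_exprn_even_ge0 // rpredB.
rewrite hurwitzE pmulr_lgt0 //; split=> [stable | pr_gt0 z].
  apply: mulr_gt0;
    [apply: (quadratic_stable_coeff (q := q) pR) | apply: (quadratic_stable_coeff (q := w) rR)];
    by move=> z zroot; apply: stable; rewrite factorE zroot (mul0r, mulr0).
have [p_gt0 r_gt0] : 0 < p /\ 0 < r.
  by apply: (pos_of_prod_sum pR rR ltr01 ltr01 pr_gt0); rewrite !mul1r -a1E.
have [w_gt0 q_gt0] : 0 < w /\ 0 < q.
  by apply: (pos_of_prod_sum wR qR p_gt0 r_gt0); [rewrite mulrC -a4E | rewrite -a3E].
rewrite factorE => /eqP; rewrite mulf_eq0 => /orP[] /eqP zroot.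
  exact: quadratic_stable pR qR p_gt0 q_gt0 zroot.
exact: quadratic_stable rR wR r_gt0 w_gt0 zroot.
Qed.

End RouthHurwitz.

Lemma det_char_quartic (R : comNzRingType) (k11 k22 nu d11 d12 d22 l : R) :
  \det (l ^+ 2 *: 1%:M + l *: mx2 d11 d12 d12 d22 + mx2 k11 0 0 k22 + mx2 0 nu (- nu) 0)
  = l ^+ 4 + (d11 + d22) * l ^+ 3 + (k11 + k22 + (d11 * d22 - d12 ^+ 2)) * l ^+ 2
    + (d11 * k22 + d22 * k11) * l + (k11 * k22 + nu ^+ 2).
Proof.
rewrite (expand_det_row _ ord0) !big_ord_recr big_ord0 /= add0r /cofactor !det_mx11.
by rewrite !mxE /=; ring.
Qed.

Definition vec2 (R : Type) (a b : R) : 'cV[R]_2 :=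
  \matrix_(i < 2, j < 1) (if i == 0 :> nat then a else b).

Lemma quadform_mx2 (R : comNzRingType) (d11 d12 d22 a b : R) :
  ((vec2 a b)^T *m mx2 d11 d12 d12 d22 *m vec2 a b) 0 0
  = a * a * d11 + 2 * a * b * d12 + b * b * d22.
Proof.
rewrite /vec2 /mx2 !mxE !big_ord_recr big_ord0 /= !mxE !big_ord_recr !big_ord0 /= !mxE /=.
by ring.
Qed.

(* A positive definite symmetric 2x2 matrix has positive diagonal entries
   (evaluate the quadratic form at the real vectors (1, 0) and (0, 1)). *)
Lemma posdef_mx2_diag (R : numFieldType) (d11 d12 d22 : R) :
  posdef (mx2 d11 d12 d12 d22) -> 0 < d11 /\ 0 < d22.
Proof.
move=> pd.
have form_gt0 a b : a \is Num.real -> b \is Num.real -> (a != 0) || (b != 0) ->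
    0 < a * a * d11 + 2 * a * b * d12 + b * b * d22.
  move=> aR bR ab0; rewrite -quadform_mx2; apply: pd => [i|].
    by rewrite mxE; case: ifP.
  apply: contraL ab0 => /eqP v0; rewrite negb_or negbK.
  have := congr1 (fun v : 'cV_2 => v 0 0) v0; have := congr1 (fun v : 'cV_2 => v 1 0) v0.
  by rewrite !mxE /= => -> ->; rewrite eqxx.
split.
  have := form_gt0 1 0 (rpred1 _) (rpred0 _); rewrite oner_neq0 => /(_ isT).
  by rewrite !(mul1r, mulr1, mul0r, mulr0, add0r, addr0).
have := form_gt0 0 1 (rpred0 _) (rpred1 _); rewrite oner_neq0 orbT => /(_ isT).
by rewrite !(mul1r, mulr1, mul0r, mulr0, add0r, addr0).
Qed.

Theorem mainTheorem4 (C : numClosedFieldType) (k11 k22 nu d11 d12 d22 : C)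
  (hk11 : 0 < k11) (hk22 : 0 < k22) (hnu : nu \is Num.real)
  (hd11 : d11 \is Num.real) (hd12 : d12 \is Num.real) (hd22 : d22 \is Num.real)
  (hD : posdef (mx2 d11 d12 d12 d22)) :
  (forall lambda : C,
     \det (lambda ^+ 2 *: 1%:M + lambda *: mx2 d11 d12 d12 d22
           + mx2 k11 0 0 k22 + mx2 0 nu (- nu) 0) = 0 ->
     'Re lambda < 0)
  <->
  nu ^+ 2 < (k11 - k22) ^+ 2 / 4
            - ((d11 - d22) ^+ 2 * (k11 - k22) ^+ 2
               - 4 * (k11 * d22 + k22 * d11) * (d11 * d22 - d12 ^+ 2) * (d11 + d22))
              / (4 * (d11 + d22) ^+ 2).
Proof.
have [k11R k22R] := (gtr0_real hk11, gtr0_real hk22).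
have [d11_gt0 d22_gt0] := posdef_mx2_diag hD.
set a1 := d11 + d22; set a2 := k11 + k22 + (d11 * d22 - d12 ^+ 2).
set a3 := d11 * k22 + d22 * k11; set a4 := k11 * k22 + nu ^+ 2.
have a1_gt0 : 0 < a1 by rewrite addr_gt0.
have a3_gt0 : 0 < a3 by rewrite addr_gt0 ?mulr_gt0.
have a4_gt0 : 0 < a4 by rewrite ltr_wpDr ?mulr_gt0 ?real_exprn_even_ge0.
have conditionE : (k11 - k22) ^+ 2 / 4
    - ((d11 - d22) ^+ 2 * (k11 - k22) ^+ 2
       - 4 * (k11 * d22 + k22 * d11) * (d11 * d22 - d12 ^+ 2) * (d11 + d22))
      / (4 * (d11 + d22) ^+ 2) - nu ^+ 2
    = (a1 * a2 * a3 - a3 ^+ 2 - a1 ^+ 2 * a4) / a1 ^+ 2.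
  by rewrite /a1 /a2 /a3 /a4; field; rewrite gt_eqF.
have [a1R a2R] : a1 \is Num.real /\ a2 \is Num.real by split; rewrite /a1 /a2; real_closure.
have [a3R a4R] : a3 \is Num.real /\ a4 \is Num.real by split; rewrite /a3 /a4; real_closure.
rewrite -subr_gt0 conditionE pmulr_lgt0 ?invr_gt0 ?exprn_gt0 //.
rewrite -(quartic_hurwitz a1R a2R a3R a4R a1_gt0 a3_gt0 a4_gt0).
split=> stable l.
  by move=> root; apply: stable; rewrite det_char_quartic.
by rewrite det_char_quartic; apply: stable.
Qed.
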